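(* There exists a constant $\kappa>0$, independent of $r$ and of $s$, such that for every integer $r\ge1$ and every word $s^{(r)}=s_1\dots s_r\in\mathcal A^r$ with $p(s^{(r)})>0$, the generating function $\Phi(s^{(r)},t)=\mathbb E[t^{Y}]$ of the waiting time $Y=\min\{n\ge r: (U_n,U_{n-1},\dots,U_{n-r+1})=(s_1,\dots,s_r)\}$ has radius of convergence at least $1+\kappa\,p(s^{(r)})$.
   Context: Alphabet $\mathcal A=\{A,C,G,T\}$. $U=(U_n)_{n\ge1}$ is a stationary Markov chain of order 1 on $\mathcal A$ with transition matrix $Q$ (irreducible and aperiodic) started from its invariant measure $p$ (so $p(u)>0$ for all $u$). $p(s^{(r)}):=\mathbb P(U_1=s_r,U_2=s_{r-1},\dots,U_r=s_1)$. *)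

From Stdlib Require Import Reals Lra List Arith.
From Coquelicot Require Import Coquelicot.
Open Scope R_scope.

Inductive letter : Set := LA | LC | LG | LT.

Definition letter_eqb (a b : letter) : bool :=
  match a, b with
  | LA, LA | LC, LC | LG, LG | LT, LT => true
  | _, _ => false
  end.

Fixpoint word_eqb (u v : list letter) : bool :=
  match u, v with
  | nil, nil => true
  | a :: u', b :: v' => letter_eqb a b && word_eqb u' v'
  | _, _ => false
  end.

Definition letters : list letter := LA :: LC :: LG :: LT :: nil.

Definition sumlist {X : Type} (l : list X) (f : X -> R) : R :=
  fold_right Rplus 0 (map f l).

Definition sumA (f : letter -> R) : R := sumlist letters f.

Fixpoint words (n : nat) : list (list letter) :=
  match n with
  | O => nil :: nil
  | S n' => flat_map (fun a => map (cons a) (words n')) letters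
  end.

Fixpoint Qpow (Q : letter -> letter -> R) (n : nat) (x y : letter) : R :=
  match n with
  | O => if letter_eqb x y then 1 else 0
  | S n' => sumA (fun z => Qpow Q n' x z * Q z y)
  end.

Definition stochastic (Q : letter -> letter -> R) : Prop :=
  (forall x y, 0 <= Q x y) /\ (forall x, sumA (fun y => Q x y) = 1).

Definition irreducible (Q : letter -> letter -> R) : Prop :=
  forall x y, exists n, (1 <= n)%nat /\ 0 < Qpow Q n x y.

Definition aperiodic (Q : letter -> letter -> R) : Prop :=
  forall x d, (forall n, (1 <= n)%nat -> 0 < Qpow Q n x x -> Nat.divide d n) -> d = 1%nat.

Definition invariant_measure (Q : letter -> letter -> R) (p : letter -> R) : Prop :=
  (forall x, 0 <= p x) /\ sumA p = 1 /\
  (forall y, sumA (fun x => p x * Q x y) = p y).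

Fixpoint trans_prob (Q : letter -> letter -> R) (u : letter) (w : list letter) : R :=
  match w with
  | nil => 1
  | v :: w' => Q u v * trans_prob Q v w'
  end.

(* P(U_1 = u_1, ..., U_n = u_n) for the stationary chain, w = [u_1; ...; u_n] *)
Definition path_prob (p : letter -> R) (Q : letter -> letter -> R) (w : list letter) : R :=
  match w with
  | nil => 1
  | u :: w' => p u * trans_prob Q u w'
  end.

(* p(s^(r)) = P(U_1 = s_r, ..., U_r = s_1), with s = [s_1; ...; s_r] *)
Definition pword (p : letter -> R) (Q : letter -> letter -> R) (s : list letter) : R :=
  path_prob p Q (rev s).

(* For w = [U_1; ...; U_N] and m <= N: the event
   (U_m, U_{m-1}, ..., U_{m-r+1}) = (s_1, ..., s_r), with r = length s. *)
Definition occurs_at (s w : list letter) (m : nat) : bool :=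
  Nat.leb (length s) m &&
  word_eqb (rev (skipn (m - length s) (firstn m w))) s.

(* Y = length w, i.e. first m >= r with an occurrence is m = length w *)
Definition first_hit (s w : list letter) : bool :=
  Nat.leb (length s) (length w) && occurs_at s w (length w) &&
  forallb (fun m => negb (occurs_at s w m)) (seq (length s) (length w - length s)).

Definition hit_prob (p : letter -> R) (Q : letter -> letter -> R) (s : list letter) (n : nat) : R :=
  sumlist (words n) (fun w => if first_hit s w then path_prob p Q w else 0).

(* Phi(s^(r), t) = E[t^Y] = sum_n P(Y = n) t^n, as a power series in t *)

From Stdlib Require Import Reals Lra Lia List Arith.
From Coquelicot Require Import Coquelicot.
Open Scope R_scope.

(* On a four-letter alphabet, irreducibility and aperiodicity forbid a path of
   four steps with probability 1, so path probabilities decay geometrically: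
   [trans_prob z c <= C0 beta ^ |c|].  Irreducibility also gives Cesaro bounds
   [sum_(k < M r) Q^k(x, y) >= r eta].  Fix a block of [K = r + M r] steps and let
   [N] count the occurrences of the word ending in its last [M r] positions.  Then
   [E N >= r eta p(s)], and, since two occurrences at distance [d] force
   [min d r] prescribed letters, [E N^2 <= B E N]; by the second-moment method
   the block misses the word with probability at most [1 - theta],
   [theta = r eta p(s) / B], from every starting state.  Hence
   [P(Y > n + K) <= (1 - theta) P(Y > n)], so [P(Y = n)] decays like
   [(1 - theta) ^ (n / K)] and the radius of convergence is at least
   [1 + theta / K = 1 + kappa p(s)] with [kappa = eta / (B (M + 1))]. *)

Section Sumlist.
Context {X : Type}.

Lemma sumlist_nil f : sumlist (@nil X) f = 0.
Proof. reflexivity. Qed.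

Lemma sumlist_cons (a : X) l f : sumlist (a :: l) f = f a + sumlist l f.
Proof. reflexivity. Qed.

Lemma sumlist_app (l1 l2 : list X) f : sumlist (l1 ++ l2) f = sumlist l1 f + sumlist l2 f.
Proof.
  induction l1 as [|a l1 IH]; simpl; rewrite ?sumlist_nil; [ring|].
  rewrite !sumlist_cons, IH; ring.
Qed.

Lemma sumlist_ext_in (l : list X) f g :
  (forall x, In x l -> f x = g x) -> sumlist l f = sumlist l g.
Proof.
  induction l as [|a l IH]; intros H; [reflexivity|].
  rewrite !sumlist_cons, H by (simpl; auto).
  rewrite IH; [reflexivity|]. intros; apply H; simpl; auto.
Qed.

Lemma sumlist_ext (l : list X) f g : (forall x, f x = g x) -> sumlist l f = sumlist l g.
Proof. intros H; apply sumlist_ext_in; auto. Qed.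

Lemma sumlist_le_in (l : list X) f g :
  (forall x, In x l -> f x <= g x) -> sumlist l f <= sumlist l g.
Proof.
  induction l as [|a l IH]; intros H; rewrite ?sumlist_nil; [lra|].
  rewrite !sumlist_cons. apply Rplus_le_compat.
  - apply H; simpl; auto.
  - apply IH; intros; apply H; simpl; auto.
Qed.

Lemma sumlist_le (l : list X) f g : (forall x, f x <= g x) -> sumlist l f <= sumlist l g.
Proof. intros H; apply sumlist_le_in; auto. Qed.

Lemma sumlist_plus (l : list X) f g :
  sumlist l (fun x => f x + g x) = sumlist l f + sumlist l g.
Proof. induction l as [|a l IH]; rewrite ?sumlist_nil; [ring|]. rewrite !sumlist_cons, IH; ring. Qed.

Lemma sumlist_scal_l (l : list X) c f : sumlist l (fun x => c * f x) = c * sumlist l f.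
Proof. induction l as [|a l IH]; rewrite ?sumlist_nil; [ring|]. rewrite !sumlist_cons, IH; ring. Qed.

Lemma sumlist_scal_r (l : list X) c f : sumlist l (fun x => f x * c) = sumlist l f * c.
Proof. induction l as [|a l IH]; rewrite ?sumlist_nil; [ring|]. rewrite !sumlist_cons, IH; ring. Qed.

Lemma sumlist_zero (l : list X) : sumlist l (fun _ => 0) = 0.
Proof. induction l as [|a l IH]; rewrite ?sumlist_nil; [ring|]. rewrite sumlist_cons, IH; ring. Qed.

Lemma sumlist_nonneg (l : list X) f : (forall x, In x l -> 0 <= f x) -> 0 <= sumlist l f.
Proof. intros H. rewrite <- (sumlist_zero l). apply sumlist_le_in; auto. Qed.

Lemma sumlist_const_le (l : list X) f c :
  (forall x, In x l -> f x <= c) -> sumlist l f <= INR (length l) * c.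
Proof.
  induction l as [|a l IH]; intros H; simpl length; rewrite ?sumlist_nil; [simpl; lra|].
  rewrite sumlist_cons, S_INR.
  assert (f a <= c) by (apply H; simpl; auto).
  assert (sumlist l f <= INR (length l) * c) by (apply IH; intros; apply H; simpl; auto).
  lra.
Qed.

Lemma term_le_sumlist (l : list X) f a :
  In a l -> (forall x, In x l -> 0 <= f x) -> f a <= sumlist l f.
Proof.
  intros Ha H. apply in_split in Ha as [l1 [l2 ->]].
  rewrite sumlist_app, sumlist_cons.
  assert (0 <= sumlist l1 f) by (apply sumlist_nonneg; intros; apply H, in_or_app; auto).
  assert (0 <= sumlist l2 f) by (apply sumlist_nonneg; intros; apply H, in_or_app; simpl; auto).
  lra.
Qed.

End Sumlist.

Lemma sumlist_swap {X Y} (l1 : list X) (l2 : list Y) f :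
  sumlist l1 (fun i => sumlist l2 (fun j => f i j))
  = sumlist l2 (fun j => sumlist l1 (fun i => f i j)).
Proof.
  induction l1 as [|a l1 IH].
  - rewrite sumlist_nil, <- (sumlist_zero l2). apply sumlist_ext. reflexivity.
  - rewrite sumlist_cons, IH, <- sumlist_plus. reflexivity.
Qed.

Lemma sumlist_map {X Y} (h : Y -> X) l f : sumlist (map h l) f = sumlist l (fun x => f (h x)).
Proof. unfold sumlist. rewrite map_map. reflexivity. Qed.

Lemma sumlist_flat_map {X Y} (g : Y -> list X) l f :
  sumlist (flat_map g l) f = sumlist l (fun a => sumlist (g a) f).
Proof.
  induction l as [|a l IH]; [reflexivity|].
  simpl. rewrite sumlist_app, sumlist_cons, IH. reflexivity.
Qed.

Lemma sumA_eq f : sumA f = f LA + (f LC + (f LG + (f LT + 0))).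
Proof. reflexivity. Qed.

Lemma in_letters a : In a letters.
Proof. destruct a; simpl; tauto. Qed.

Lemma letter_eqb_spec a b : letter_eqb a b = true <-> a = b.
Proof. destruct a, b; simpl; split; intro; congruence. Qed.

Lemma word_eqb_spec u v : word_eqb u v = true <-> u = v.
Proof.
  revert v; induction u as [|a u IH]; intros [|b v]; simpl; split; intro H; try congruence.
  - apply andb_prop in H as [Hab Huv].
    apply letter_eqb_spec in Hab. apply IH in Huv. congruence.
  - injection H as -> ->. apply andb_true_intro; split.
    + apply letter_eqb_spec; reflexivity.
    + apply IH; reflexivity.
Qed.

Lemma word_eqb_rev u v : word_eqb (rev u) v = word_eqb u (rev v).
Proof.
  apply Bool.eq_iff_eq_true. rewrite !word_eqb_spec.
  split; intros H; subst; [symmetry|]; apply rev_involutive.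
Qed.

Lemma sumlist_words_0 f : sumlist (words 0) f = f nil.
Proof. simpl. rewrite sumlist_cons, sumlist_nil; ring. Qed.

Lemma sumlist_words_S n f :
  sumlist (words (S n)) f = sumA (fun a => sumlist (words n) (fun w => f (a :: w))).
Proof.
  change (words (S n)) with (flat_map (fun a => map (cons a) (words n)) letters).
  rewrite sumlist_flat_map. apply sumlist_ext; intro a. apply sumlist_map.
Qed.

Lemma sumlist_words_add n k f :
  sumlist (words (n + k)) f =
  sumlist (words n) (fun w => sumlist (words k) (fun v => f (w ++ v))).
Proof.
  revert f; induction n as [|n IH]; intros f; simpl plus.
  - rewrite sumlist_words_0. reflexivity.
  - rewrite (sumlist_words_S (n + k)), (sumlist_words_S n). unfold sumA.
    apply sumlist_ext; intro a. apply IH.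
Qed.

Lemma words_length n w : In w (words n) -> length w = n.
Proof.
  revert w; induction n as [|n IH]; intros w H.
  - destruct H as [<-|[]]; reflexivity.
  - change (words (S n)) with (flat_map (fun a => map (cons a) (words n)) letters) in H.
    apply in_flat_map in H as [a [_ H]]. apply in_map_iff in H as [w' [<- H]].
    simpl; rewrite IH; auto.
Qed.

Lemma in_words n w : length w = n -> In w (words n).
Proof.
  revert w; induction n as [|n IH]; intros [|a w] Hw; try discriminate.
  - left; reflexivity.
  - change (words (S n)) with (flat_map (fun a => map (cons a) (words n)) letters).
    apply in_flat_map. exists a. split; [apply in_letters|].
    apply in_map, IH. simpl in Hw; lia.
Qed.

Lemma sumlist_words_indicator n u g : length u = n ->
  sumlist (words n) (fun w => if word_eqb w u then g w else 0) = g u.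
Proof.
  revert u g; induction n as [|n IH]; intros [|a u] g Hu; try discriminate.
  - rewrite sumlist_words_0. reflexivity.
  - rewrite sumlist_words_S.
    transitivity (sumA (fun b => if letter_eqb b a then g (a :: u) else 0)).
    + unfold sumA. apply sumlist_ext; intro b. simpl word_eqb.
      destruct (letter_eqb b a) eqn:E; simpl.
      * apply letter_eqb_spec in E as ->.
        apply (IH u (fun w => g (a :: w))). simpl in Hu; injection Hu; auto.
      * apply sumlist_zero.
    + destruct a; rewrite sumA_eq; simpl; ring.
Qed.

Lemma last_cons {X} (a : X) w d : last (a :: w) d = last w a.
Proof.
  revert a d; induction w as [|b w IH]; intros a d; [reflexivity|].
  change (last (b :: w) d = last (b :: w) a). rewrite !IH. reflexivity.
Qed.

Definition b2R (b : bool) : R := if b then 1 else 0.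

Lemma b2R_bounds b : 0 <= b2R b <= 1.
Proof. destruct b; simpl; lra. Qed.

(* [chain_expect Q x n f] is the expectation of [f (U_1, ..., U_n)] for the
   chain started at [U_0 = x]. *)
Definition chain_expect (Q : letter -> letter -> R) (x : letter) (n : nat)
    (f : list letter -> R) : R :=
  sumlist (words n) (fun v => trans_prob Q x v * f v).

Section Chain.
Variable Q : letter -> letter -> R.
Hypothesis HQ : stochastic Q.

Lemma Q_bounds x y : 0 <= Q x y <= 1.
Proof.
  destruct HQ as [H0 H1]. specialize (H1 x). rewrite sumA_eq in H1.
  pose proof (H0 x LA); pose proof (H0 x LC); pose proof (H0 x LG); pose proof (H0 x LT).
  split; [apply H0|]. destruct y; lra.
Qed.

Lemma trans_prob_app x w v :
  trans_prob Q x (w ++ v) = trans_prob Q x w * trans_prob Q (last w x) v.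
Proof.
  revert x; induction w as [|a w IH]; intros x; simpl app.
  - simpl. ring.
  - change (Q x a * trans_prob Q a (w ++ v)
            = Q x a * trans_prob Q a w * trans_prob Q (last (a :: w) x) v).
    rewrite last_cons, IH. ring.
Qed.

Lemma trans_prob_bounds x w : 0 <= trans_prob Q x w <= 1.
Proof.
  revert x; induction w as [|a w IH]; intros x; simpl; [lra|].
  pose proof (IH a); pose proof (Q_bounds x a). split; nra.
Qed.

Lemma Qpow_add m n x y : Qpow Q (m + n) x y = sumA (fun z => Qpow Q m x z * Qpow Q n z y).
Proof.
  revert y; induction n as [|n IH]; intros y.
  - rewrite Nat.add_0_r. destruct y; rewrite sumA_eq; simpl; ring.
  - rewrite Nat.add_succ_r. simpl. rewrite !sumA_eq, !IH, !sumA_eq. ring.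
Qed.

Lemma Qpow_1 x y : Qpow Q 1 x y = Q x y.
Proof. destruct x; simpl; rewrite sumA_eq; simpl; ring. Qed.

Lemma Qpow_nonneg n x y : 0 <= Qpow Q n x y.
Proof.
  revert y; induction n as [|n IH]; intros y; simpl.
  - destruct (letter_eqb x y); lra.
  - apply sumlist_nonneg. intros z _. apply Rmult_le_pos; [apply IH | apply Q_bounds].
Qed.

Lemma sumA_Qpow n x : sumA (Qpow Q n x) = 1.
Proof.
  induction n as [|n IH].
  - destruct x; rewrite sumA_eq; simpl; ring.
  - rewrite <- IH.
    change (sumA (fun z => sumA (fun y => Qpow Q n x y * Q y z)) = sumA (Qpow Q n x)).
    destruct HQ as [_ H1]. unfold sumA in *. rewrite sumlist_swap.
    apply sumlist_ext; intro y. rewrite sumlist_scal_l, H1. ring.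
Qed.

Lemma chain_expect_ext x n f g :
  (forall w, length w = n -> f w = g w) -> chain_expect Q x n f = chain_expect Q x n g.
Proof.
  intros H. apply sumlist_ext_in. intros w Hw. rewrite H; auto. apply words_length; auto.
Qed.

Lemma chain_expect_le x n f g :
  (forall w, length w = n -> f w <= g w) -> chain_expect Q x n f <= chain_expect Q x n g.
Proof.
  intros H. apply sumlist_le_in. intros w Hw.
  apply Rmult_le_compat_l; [apply trans_prob_bounds | apply H, words_length; auto].
Qed.

Lemma chain_expect_scal_r x n f c :
  chain_expect Q x n (fun w => f w * c) = chain_expect Q x n f * c.
Proof.
  unfold chain_expect. rewrite <- sumlist_scal_r. apply sumlist_ext; intro; ring.
Qed.

Lemma chain_expect_scal_l x n c f :
  chain_expect Q x n (fun w => c * f w) = c * chain_expect Q x n f.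
Proof.
  unfold chain_expect. rewrite <- sumlist_scal_l. apply sumlist_ext; intro; ring.
Qed.

Lemma chain_expect_plus x n f g :
  chain_expect Q x n (fun w => f w + g w) = chain_expect Q x n f + chain_expect Q x n g.
Proof.
  unfold chain_expect. rewrite <- sumlist_plus. apply sumlist_ext; intro; ring.
Qed.

Lemma chain_expect_sumlist {X} x n (l : list X) f :
  chain_expect Q x n (fun w => sumlist l (fun i => f i w))
  = sumlist l (fun i => chain_expect Q x n (f i)).
Proof.
  unfold chain_expect. rewrite <- sumlist_swap.
  apply sumlist_ext; intro w. symmetry. apply sumlist_scal_l.
Qed.

Lemma chain_expect_const x n c : chain_expect Q x n (fun _ => c) = c.
Proof.
  revert x; induction n as [|n IH]; intros x.
  - unfold chain_expect. rewrite sumlist_words_0. simpl. ring.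
  - unfold chain_expect in *. rewrite sumlist_words_S. simpl trans_prob.
    transitivity (sumA (fun a => Q x a) * c).
    + unfold sumA. rewrite <- sumlist_scal_r. apply sumlist_ext; intro a.
      transitivity (Q x a * sumlist (words n) (fun v => trans_prob Q a v * c)).
      * rewrite <- sumlist_scal_l. apply sumlist_ext; intro; ring.
      * rewrite IH. reflexivity.
    + destruct HQ as [_ H1]. rewrite H1. ring.
Qed.

Lemma sum_trans_prob x n : sumlist (words n) (trans_prob Q x) = 1.
Proof.
  rewrite <- (chain_expect_const x n 1). unfold chain_expect.
  apply sumlist_ext; intro; ring.
Qed.

Lemma chain_expect_nonneg x n f :
  (forall w, length w = n -> 0 <= f w) -> 0 <= chain_expect Q x n f.
Proof.
  intros H. rewrite <- (chain_expect_const x n 0). apply chain_expect_le. exact H.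
Qed.

Lemma chain_expect_add x m n f :
  chain_expect Q x (m + n) f
  = chain_expect Q x m (fun w => chain_expect Q (last w x) n (fun v => f (w ++ v))).
Proof.
  unfold chain_expect. rewrite sumlist_words_add. apply sumlist_ext; intro w.
  rewrite <- sumlist_scal_l. apply sumlist_ext; intro v. rewrite trans_prob_app. ring.
Qed.

Lemma chain_expect_prefix x m n f g :
  (forall w v, length w = m -> length v = n -> f (w ++ v) = g w) ->
  chain_expect Q x (m + n) f = chain_expect Q x m g.
Proof.
  intros H. rewrite chain_expect_add. apply chain_expect_ext; intros w Hw.
  rewrite <- (chain_expect_const (last w x) n (g w)).
  apply chain_expect_ext; intros v Hv. auto.
Qed.

Lemma chain_expect_last x n f :
  chain_expect Q x n (fun w => f (last w x)) = sumA (fun z => Qpow Q n x z * f z).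
Proof.
  revert x f; induction n as [|n IH]; intros x f.
  - unfold chain_expect. rewrite sumlist_words_0. destruct x; rewrite sumA_eq; simpl; ring.
  - change (S n) with (1 + n)%nat. rewrite chain_expect_add.
    unfold chain_expect at 1. rewrite sumlist_words_S.
    transitivity (sumA (fun a => Q x a * sumA (fun z => Qpow Q n a z * f z))).
    + apply sumlist_ext; intro a. rewrite sumlist_words_0, <- IH.
      cbn [trans_prob app]. rewrite Rmult_1_r. f_equal.
      apply chain_expect_ext; intros v _. rewrite last_cons. reflexivity.
    + transitivity (sumA (fun z => sumA (fun a => Qpow Q 1 x a * Qpow Q n a z) * f z)).
      * rewrite !sumA_eq, !Qpow_1. ring.
      * apply sumlist_ext; intro z. rewrite Qpow_add. reflexivity.
Qed.

Lemma chain_expect_word x u :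
  chain_expect Q x (length u) (fun w => b2R (word_eqb w u)) = trans_prob Q x u.
Proof.
  unfold chain_expect.
  rewrite <- (sumlist_words_indicator (length u) u (trans_prob Q x)) by reflexivity.
  apply sumlist_ext; intro w. destruct (word_eqb w u) eqn:E; simpl; [|ring].
  apply word_eqb_spec in E as ->. ring.
Qed.

Lemma chain_expect_window x n a c : (a + length c <= n)%nat ->
  chain_expect Q x n (fun v => b2R (word_eqb (firstn (length c) (skipn a v)) c))
  = sumA (fun z => Qpow Q a x z * trans_prob Q z c).
Proof.
  intros Hn. set (k := length c).
  replace n with (a + (k + (n - a - k)))%nat by lia.
  rewrite chain_expect_add, <- chain_expect_last. apply chain_expect_ext; intros w Hw.
  rewrite <- chain_expect_word. fold k.
  apply chain_expect_prefix; intros u v Hu Hv.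
  rewrite skipn_app, skipn_all2, Hw, Nat.sub_diag by lia. simpl.
  rewrite firstn_app, <- Hu, firstn_all, Nat.sub_diag. simpl. rewrite app_nil_r. reflexivity.
Qed.

Lemma chain_expect_window_le x n a c g : (a + length c <= n)%nat ->
  (forall z, trans_prob Q z c <= g) ->
  chain_expect Q x n (fun v => b2R (word_eqb (firstn (length c) (skipn a v)) c)) <= g.
Proof.
  intros Hn Hg. rewrite chain_expect_window by exact Hn.
  rewrite <- (Rmult_1_l g), <- (sumA_Qpow a x). unfold sumA. rewrite <- sumlist_scal_r.
  apply sumlist_le; intro z. apply Rmult_le_compat_l; [apply Qpow_nonneg | apply Hg].
Qed.

End Chain.

Lemma occurs_at_app_l s w v m :
  (m <= length w)%nat -> occurs_at s (w ++ v) m = occurs_at s w m.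
Proof.
  intros H. unfold occurs_at. rewrite firstn_app.
  replace (m - length w)%nat with 0%nat by lia. simpl. rewrite app_nil_r. reflexivity.
Qed.

Lemma occurs_at_app_r s w v j :
  (length s <= j)%nat -> occurs_at s (w ++ v) (length w + j) = occurs_at s v j.
Proof.
  intros H. unfold occurs_at.
  replace (Nat.leb (length s) (length w + j)) with true by (symmetry; apply Nat.leb_le; lia).
  replace (Nat.leb (length s) j) with true by (symmetry; apply Nat.leb_le; lia).
  rewrite firstn_app, firstn_all2, skipn_app, skipn_all2 by lia.
  replace (length w + j - length w)%nat with j by lia.
  replace (length w + j - length s - length w)%nat with (j - length s)%nat by lia.
  reflexivity.
Qed.

Lemma occurs_at_window s v j : (length s <= j <= length v)%nat ->
  occurs_at s v j = word_eqb (firstn (length s) (skipn (j - length s) v)) (rev s).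
Proof.
  intros H. unfold occurs_at.
  replace (Nat.leb (length s) j) with true by (symmetry; apply Nat.leb_le; lia).
  rewrite skipn_firstn_comm, word_eqb_rev.
  replace (j - (j - length s))%nat with (length s) by lia. reflexivity.
Qed.

Lemma occurs_at_tail_window s v j k : (k <= length s <= j)%nat -> (j <= length v)%nat ->
  occurs_at s v j = true -> firstn k (skipn (j - k) v) = skipn (length s - k) (rev s).
Proof.
  intros Hk Hj Hocc. rewrite occurs_at_window in Hocc by lia.
  apply word_eqb_spec in Hocc. rewrite <- Hocc, skipn_firstn_comm, skipn_skipn.
  do 2 f_equal; lia.
Qed.

Section Occurrences.
Variable Q : letter -> letter -> R.
Hypothesis HQ : stochastic Q.
Variable s : list letter.

Lemma chain_expect_occurs_at x K j : (length s <= j <= K)%nat ->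
  chain_expect Q x K (fun v => b2R (occurs_at s v j))
  = sumA (fun z => Qpow Q (j - length s) x z * trans_prob Q z (rev s)).
Proof.
  intros Hj. rewrite <- (chain_expect_window Q HQ x K) by (rewrite length_rev; lia).
  apply chain_expect_ext; intros v Hv.
  rewrite occurs_at_window, length_rev by lia. reflexivity.
Qed.

(* Two occurrences ending at [i < j] share at most [min (j - i) r] letters
   beyond position [i]; those letters cost at most [G] by the Markov property. *)
Lemma chain_expect_occurs_pair_le (G : nat -> R) x K i j :
  (forall z c, trans_prob Q z c <= G (length c)) ->
  (length s <= i)%nat -> (i < j <= K)%nat ->
  chain_expect Q x K (fun v => b2R (occurs_at s v i) * b2R (occurs_at s v j))
  <= chain_expect Q x K (fun v => b2R (occurs_at s v i)) * G (Nat.min (j - i) (length s)).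
Proof.
  intros HG Hi Hij. set (k := Nat.min (j - i) (length s)).
  set (c := skipn (length s - k) (rev s)).
  assert (Hc : length c = k) by (unfold c, k; rewrite length_skipn, length_rev; lia).
  set (o := fun m v => b2R (occurs_at s v m)).
  apply Rle_trans with
    (chain_expect Q x K (fun v => o i v * b2R (word_eqb (firstn k (skipn (j - k) v)) c))).
  { apply chain_expect_le; auto. intros v Hv. unfold o.
    pose proof (b2R_bounds (occurs_at s v i)).
    destruct (occurs_at s v j) eqn:E; simpl.
    - replace (word_eqb _ c) with true; [simpl; lra|].
      symmetry. apply word_eqb_spec, occurs_at_tail_window; auto; unfold k; lia.
    - pose proof (b2R_bounds (word_eqb (firstn k (skipn (j - k) v)) c)). nra. }
  replace K with (i + (K - i))%nat by lia.
  rewrite !chain_expect_add, <- chain_expect_scal_r.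
  apply chain_expect_le; auto. intros w Hw.
  transitivity (o i w * chain_expect Q (last w x) (K - i)
                  (fun v => b2R (word_eqb (firstn (length c) (skipn (j - i - k) v)) c))).
  - right. rewrite <- chain_expect_scal_l. apply chain_expect_ext; intros v Hv.
    unfold o. rewrite occurs_at_app_l, skipn_app, skipn_all2, Hc, Hw by lia.
    replace (j - k - i)%nat with (j - i - k)%nat by lia. reflexivity.
  - rewrite (chain_expect_ext Q (last w x) (K - i)
               (fun v => b2R (occurs_at s (w ++ v) i)) (fun _ => o i w))
      by (intros v _; cbv beta; unfold o; rewrite occurs_at_app_l by lia; reflexivity).
    rewrite chain_expect_const by auto.
    apply Rmult_le_compat_l; [apply b2R_bounds|].
    apply chain_expect_window_le; auto; [lia|]. intros z. rewrite <- Hc. apply HG.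
Qed.

End Occurrences.

Lemma list_max_lt {X} (l : list X) (f : X -> R) c :
  (forall x, In x l -> f x < c) -> exists g, g < c /\ forall x, In x l -> f x <= g.
Proof.
  induction l as [|a l IH]; intros H.
  - exists (c - 1). split; [lra | intros x []].
  - destruct IH as [g [Hg Hle]]; [intros; apply H; simpl; auto|].
    exists (Rmax (f a) g). split.
    + apply Rmax_lub_lt; auto. apply H; simpl; auto.
    + intros x [<-|Hx]; [apply Rmax_l|]. eapply Rle_trans; [apply Hle; auto | apply Rmax_r].
Qed.

Lemma pow_le1_antimono x m n : 0 <= x <= 1 -> (m <= n)%nat -> x ^ n <= x ^ m.
Proof.
  intros Hx Hmn. replace n with (m + (n - m))%nat by lia. rewrite pow_add.
  pose proof (pow_le x m (proj1 Hx)).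
  assert (x ^ (n - m) <= 1) by (rewrite <- (pow1 (n - m)); apply pow_incr; lra).
  assert (0 <= x ^ (n - m)) by (apply pow_le; lra).
  nra.
Qed.

Lemma trans_prob_geometric Q (HQ : stochastic Q) m g : (1 <= m)%nat -> 0 < g < 1 ->
  (forall z c, length c = m -> trans_prob Q z c <= g) ->
  exists beta, 0 < beta < 1 /\ forall z c, trans_prob Q z c <= / g * beta ^ length c.
Proof.
  intros Hm Hg Hblock. set (beta := Rpower g (/ INR m)). exists beta.
  assert (Hm0 : 0 < INR m) by (apply lt_0_INR; lia).
  assert (Hb0 : 0 < beta) by apply exp_pos.
  assert (Hb1 : beta < 1).
  { unfold beta, Rpower. rewrite <- exp_0. apply exp_increasing.
    pose proof (ln_increasing g 1 (proj1 Hg) (proj2 Hg)). rewrite ln_1 in *.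
    pose proof (Rinv_0_lt_compat _ Hm0). nra. }
  assert (Hbm : beta ^ m = g).
  { rewrite <- Rpower_pow by exact Hb0. unfold beta.
    rewrite Rpower_mult, Rinv_l, Rpower_1 by lra. reflexivity. }
  split; [lra|]. intros z c. remember (length c) as n eqn:Hn. revert z c Hn.
  induction n as [n IH] using lt_wf_ind. intros z c Hn.
  destruct (Nat.lt_ge_cases n m) as [Hlt|Hge].
  - pose proof (trans_prob_bounds Q HQ z c).
    assert (g <= beta ^ n) by (rewrite <- Hbm; apply pow_le1_antimono; lia || lra).
    apply Rle_trans with 1; [lra|].
    apply Rmult_le_reg_l with g; [lra|]. rewrite <- Rmult_assoc, Rinv_r; lra.
  - rewrite <- (firstn_skipn m c), trans_prob_app.
    assert (Hfirst : length (firstn m c) = m) by (rewrite length_firstn; lia).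
    assert (Hrest : length (skipn m c) = (n - m)%nat) by (rewrite length_skipn; lia).
    pose proof (Hblock z _ Hfirst).
    pose proof (IH (n - m)%nat ltac:(lia) (last (firstn m c) z) (skipn m c) (eq_sym Hrest)).
    pose proof (trans_prob_bounds Q HQ z (firstn m c)).
    pose proof (trans_prob_bounds Q HQ (last (firstn m c) z) (skipn m c)).
    replace n with (m + (n - m))%nat by lia. rewrite pow_add, Hbm.
    apply Rle_trans with (g * (/ g * beta ^ (n - m))).
    + apply Rmult_le_compat; lra.
    + right. field. lra.
Qed.

Section Aperiodicity.
Variable Q : letter -> letter -> R.
Hypothesis HQ : stochastic Q.
Hypothesis Hirr : irreducible Q.
Hypothesis Hap : aperiodic Q.

Lemma Q_deterministic_row a b z : Q a b = 1 -> Q a z = if letter_eqb z b then 1 else 0.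
Proof.
  intros H. destruct HQ as [H0 H1]. specialize (H1 a). rewrite sumA_eq in H1.
  pose proof (H0 a LA); pose proof (H0 a LC); pose proof (H0 a LG); pose proof (H0 a LT).
  destruct b, z; simpl; lra.
Qed.

Lemma Qpow_deterministic (f : nat -> letter) :
  (forall k, Q (f k) (f (S k)) = 1) ->
  forall n k z, Qpow Q n (f k) z = if letter_eqb (f (k + n)%nat) z then 1 else 0.
Proof.
  intros Hf n. induction n as [|n IH]; intros k z.
  - rewrite Nat.add_0_r. reflexivity.
  - change (S n) with (1 + n)%nat. rewrite Qpow_add, sumA_eq, !Qpow_1.
    rewrite !(Q_deterministic_row _ _ _ (Hf k)).
    transitivity (Qpow Q n (f (S k)) z); [destruct (f (S k)); simpl; ring|].
    rewrite IH. replace (S k + n)%nat with (k + (1 + n))%nat by lia. reflexivity.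
Qed.

Lemma no_absorbing_state y : Q y y <> 1.
Proof.
  intros Hy. set (z := match y with LA => LC | _ => LA end).
  destruct (Hirr y z) as [n [_ Hn]].
  rewrite (Qpow_deterministic (fun _ => y)) in Hn by auto.
  destruct y; simpl in Hn; lra.
Qed.

(* Along a deterministic cycle through distinct states, the return times to a
   state are exactly the multiples of the cycle length. *)
Lemma no_deterministic_cycle (cyc : list letter) : cyc <> nil -> NoDup cyc ->
  (forall m, (m < length cyc)%nat ->
     Q (nth m cyc LA) (nth (S m mod length cyc) cyc LA) = 1) -> False.
Proof.
  intros Hne Hnd Hcyc.
  assert (Hc : (0 < length cyc)%nat) by (destruct cyc; [congruence | simpl; lia]).
  set (c := length cyc) in *.
  set (f := fun k => nth (k mod c) cyc LA).
  assert (Hf : forall k, Q (f k) (f (S k)) = 1).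
  { intros k. unfold f. rewrite <- Nat.add_1_r, <- Nat.Div0.add_mod_idemp_l, Nat.add_1_r.
    apply Hcyc, Nat.mod_upper_bound; lia. }
  assert (Hc1 : c = 1%nat).
  { apply (Hap (f 0%nat)). intros n _ Hpos.
    rewrite (Qpow_deterministic f Hf) in Hpos. simpl in Hpos.
    destruct (letter_eqb (f n) (f 0%nat)) eqn:E; [|lra].
    apply letter_eqb_spec in E. unfold f in E. rewrite Nat.Div0.mod_0_l in E.
    apply Nat.Lcm0.mod_divide.
    apply (proj1 (NoDup_nth cyc LA) Hnd); auto. apply Nat.mod_upper_bound; lia. }
  apply (no_absorbing_state (f 0%nat)).
  specialize (Hf 0%nat). unfold f in *. rewrite Hc1 in *. exact Hf.
Qed.

Lemma trans_prob_cons_eq_1 x a w :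
  trans_prob Q x (a :: w) = 1 -> Q x a = 1 /\ trans_prob Q a w = 1.
Proof.
  simpl. intros H. pose proof (Q_bounds Q HQ x a). pose proof (trans_prob_bounds Q HQ a w).
  split; nra.
Qed.

Ltac close_cycle cyc :=
  solve [ apply (no_deterministic_cycle cyc);
          [ discriminate
          | repeat constructor; simpl; intuition discriminate
          | intros m Hm; destruct m as [|[|[|[|]]]]; simpl in *; try lia; assumption ] ].

(* Otherwise every step is deterministic; two of the five states coincide, so the
   path runs through a deterministic cycle, which the case analysis exhibits. *)
Lemma trans_prob_length4_lt_1 x c : length c = 4%nat -> trans_prob Q x c < 1.
Proof.
  intros Hc. destruct c as [|x1 [|x2 [|x3 [|x4 [|]]]]]; try discriminate.
  destruct (trans_prob_bounds Q HQ x (x1 :: x2 :: x3 :: x4 :: nil)) as [_ [Hlt|H]]; auto.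
  exfalso.
  apply trans_prob_cons_eq_1 in H as [E1 H]. apply trans_prob_cons_eq_1 in H as [E2 H].
  apply trans_prob_cons_eq_1 in H as [E3 H]. apply trans_prob_cons_eq_1 in H as [E4 _].
  clear - HQ Hirr Hap E1 E2 E3 E4.
  destruct x, x1, x2, x3, x4;
  first
  [ match goal with H : Q ?a ?a = 1 |- _ => exact (no_absorbing_state a H) end
  | match goal with H1 : Q ?a ?b = 1, H2 : Q ?b ?a = 1 |- _ =>
      close_cycle (a :: b :: nil) end
  | match goal with H1 : Q ?a ?b = 1, H2 : Q ?b ?c = 1, H3 : Q ?c ?a = 1 |- _ =>
      close_cycle (a :: b :: c :: nil) end
  | match goal with H1 : Q ?a ?b = 1, H2 : Q ?b ?c = 1, H3 : Q ?c ?d = 1,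
                    H4 : Q ?d ?a = 1 |- _ =>
      close_cycle (a :: b :: c :: d :: nil) end ].
Qed.

Lemma trans_prob_decay :
  exists beta C, 0 < beta < 1 /\ 0 <= C /\
    forall z c, trans_prob Q z c <= C * beta ^ length c.
Proof.
  destruct (list_max_lt (list_prod letters (words 4)) (fun zc => trans_prob Q (fst zc) (snd zc)) 1)
    as [g [Hg1 Hg]].
  { intros [z c] Hzc. apply in_prod_iff in Hzc as [_ Hc].
    apply trans_prob_length4_lt_1, words_length; auto. }
  set (g' := Rmax g (1 / 2)).
  assert (Hblock : forall z c, length c = 4%nat -> trans_prob Q z c <= g').
  { intros z c Hc. eapply Rle_trans; [|apply Rmax_l].
    apply (Hg (z, c)), in_prod; [apply in_letters | apply in_words; auto]. }
  assert (Hg' : 0 < g' < 1)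
    by (split; [eapply Rlt_le_trans; [|apply Rmax_r]; lra | apply Rmax_lub_lt; lra]).
  destruct (trans_prob_geometric Q HQ 4 g') as [beta [Hb Hdecay]]; auto.
  exists beta, (/ g'). split; [exact Hb|]. split; [|exact Hdecay].
  apply Rlt_le, Rinv_0_lt_compat; lra.
Qed.

End Aperiodicity.

Lemma list_min_gt {X} (l : list X) (f : X -> R) :
  (forall x, In x l -> 0 < f x) -> exists e, 0 < e /\ forall x, In x l -> e <= f x.
Proof.
  intros H. destruct (list_max_lt l (fun x => - f x) 0) as [g [Hg Hle]].
  - intros x Hx. specialize (H x Hx). lra.
  - exists (- g). split; [lra|]. intros x Hx. specialize (Hle x Hx). simpl in Hle. lra.
Qed.

Lemma letter_nat_bound (P : letter -> nat -> Prop) :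
  (forall x M M', P x M -> (M <= M')%nat -> P x M') ->
  (forall x, exists M, P x M) -> exists M, forall x, P x M.
Proof.
  intros Hmono H.
  destruct (H LA) as [a Ha], (H LC) as [b Hb], (H LG) as [c Hc], (H LT) as [d Hd].
  exists (a + b + c + d)%nat. intros x; destruct x; eapply Hmono; eauto; lia.
Qed.

Lemma sumlist_seq_shift a b n f :
  sumlist (seq (a + b) n) f = sumlist (seq b n) (fun i => f (a + i)%nat).
Proof.
  revert b; induction n as [|n IH]; intros b; [reflexivity|].
  simpl seq. rewrite !sumlist_cons, <- IH. f_equal. f_equal. f_equal. lia.
Qed.

Section Irreducibility.
Variable Q : letter -> letter -> R.
Hypothesis HQ : stochastic Q.
Hypothesis Hirr : irreducible Q.

Lemma uniform_reach_time :
  exists M, forall x y, exists n, (n < M)%nat /\ 0 < Qpow Q n x y.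
Proof.
  assert (Hmono : forall (P : nat -> Prop) M M',
            (exists n, (n < M)%nat /\ P n) -> (M <= M')%nat -> exists n, (n < M')%nat /\ P n).
  { intros P M M' [n [Hn HP]] HM. exists n. split; [lia | exact HP]. }
  apply letter_nat_bound.
  - intros x M M' H HM y. eapply Hmono; eauto.
  - intros x. apply letter_nat_bound.
    + intros y M M' H HM. eapply Hmono; eauto.
    + intros y. destruct (Hirr x y) as [n [_ Hn]]. exists (S n), n. auto.
Qed.

Lemma Qpow_cesaro_lower_bound :
  exists M eta, 0 < eta /\
    forall r x y, INR r * eta <= sumlist (seq 0 (M * r)) (fun k => Qpow Q k x y).
Proof.
  destruct uniform_reach_time as [M HM].
  set (C x y := sumlist (seq 0 M) (fun k => Qpow Q k x y)).
  destruct (list_min_gt (list_prod letters letters) (fun xy => C (fst xy) (snd xy)))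
    as [eta [Heta Hle]].
  { intros [x y] _. destruct (HM x y) as [n [Hn Hpos]]. eapply Rlt_le_trans; [exact Hpos|].
    apply (term_le_sumlist (seq 0 M) (fun k => Qpow Q k x y)).
    - apply in_seq; lia.
    - intros; apply Qpow_nonneg; auto. }
  assert (HS : forall x y, eta <= C x y)
    by (intros x y; apply (Hle (x, y)), in_prod; apply in_letters).
  exists M, eta. split; [exact Heta|].
  intros r x y. induction r as [|r IH].
  - rewrite Nat.mul_0_r. simpl. rewrite sumlist_nil. lra.
  - rewrite S_INR. replace (M * S r)%nat with (M * r + M)%nat by lia.
    rewrite seq_app, sumlist_app, <- (Nat.add_0_r (0 + M * r)), sumlist_seq_shift.
    assert (eta <= sumlist (seq 0 M) (fun k => Qpow Q (0 + M * r + k) x y)).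
    { transitivity (sumA (fun z => Qpow Q (M * r) x z * C z y)).
      - rewrite <- (Rmult_1_l eta), <- (sumA_Qpow Q HQ (M * r) x).
        unfold sumA. rewrite <- sumlist_scal_r. apply sumlist_le; intro z.
        apply Rmult_le_compat_l; [apply Qpow_nonneg; auto | apply HS].
      - right. unfold C, sumA.
        transitivity (sumlist letters (fun z =>
          sumlist (seq 0 M) (fun k => Qpow Q (M * r) x z * Qpow Q k z y))).
        + apply sumlist_ext; intro z. symmetry. apply sumlist_scal_l.
        + rewrite sumlist_swap. apply sumlist_ext; intro k. rewrite Qpow_add. reflexivity. }
    lra.
Qed.

End Irreducibility.

Lemma geometric_tail_sum b i a n : 0 < b < 1 ->
  sumlist (seq a n) (fun j => if Nat.ltb i j then b ^ (j - i) else 0) <= b / (1 - b).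
Proof.
  intros Hb.
  assert (Htail : forall a, sumlist (seq a n) (fun j => if Nat.ltb i j then b ^ (j - i) else 0)
                            <= b ^ (Nat.max a (S i) - i) / (1 - b)).
  { induction n as [|n IH]; intros a'.
    - simpl seq. rewrite sumlist_nil. apply Rdiv_le_0_compat; [apply pow_le|]; lra.
    - simpl seq. rewrite sumlist_cons. specialize (IH (S a')).
      destruct (Nat.ltb i a') eqn:E.
      + apply Nat.ltb_lt in E.
        replace (Nat.max (S a') (S i) - i)%nat with (S (a' - i)) in IH by lia.
        replace (Nat.max a' (S i) - i)%nat with (a' - i)%nat by lia. simpl in IH.
        assert (b ^ (a' - i) + b * b ^ (a' - i) / (1 - b) = b ^ (a' - i) / (1 - b))
          by (field; lra).
        lra.
      + apply Nat.ltb_ge in E.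
        replace (Nat.max (S a') (S i)) with (Nat.max a' (S i)) in IH by lia. lra. }
  eapply Rle_trans; [apply Htail|]. unfold Rdiv. apply Rmult_le_compat_r.
  - apply Rlt_le, Rinv_0_lt_compat; lra.
  - rewrite <- (pow_1 b) at 2. apply pow_le1_antimono; [lra | lia].
Qed.

Lemma INR_mul_pow_le b n : 0 < b < 1 -> INR n * b ^ n <= 1 / (1 - b).
Proof.
  intros Hb.
  assert (H : forall n, INR n * b ^ n <= sumlist (seq 0 n) (fun k => b ^ k) /\
                        sumlist (seq 0 n) (fun k => b ^ k) * (1 - b) = 1 - b ^ n).
  { induction n0 as [|n0 [IH1 IH2]].
    - simpl seq. rewrite sumlist_nil. simpl. split; lra.
    - rewrite seq_S, sumlist_app, sumlist_cons, sumlist_nil, S_INR. simpl.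
      set (t := b ^ n0) in *. set (Sm := sumlist (seq 0 n0) (fun k => b ^ k)) in *.
      assert (0 <= t) by (apply pow_le; lra).
      assert (0 <= INR n0) by apply pos_INR.
      assert (b * (INR n0 * t) <= b * Sm) by (apply Rmult_le_compat_l; lra).
      assert (0 <= Sm) by (apply Rle_trans with (INR n0 * t); [apply Rmult_le_pos|]; lra).
      assert (b * Sm <= 1 * Sm) by (apply Rmult_le_compat_r; lra).
      assert (b * t <= 1 * t) by (apply Rmult_le_compat_r; lra).
      split; nra. }
  destruct (H n) as [H1 H2]. assert (0 < b ^ n) by (apply pow_lt; lra).
  eapply Rle_trans; [exact H1|].
  apply Rmult_le_reg_r with (1 - b); [lra|]. rewrite H2. field_simplify; lra.
Qed.

Lemma sumlist_seq_diag_le c i a n : 0 <= c ->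
  sumlist (seq a n) (fun j => if Nat.eqb i j then c else 0) <= c.
Proof.
  intros Hc.
  assert (Hzero : forall n a, (i < a)%nat ->
            sumlist (seq a n) (fun j => if Nat.eqb i j then c else 0) = 0).
  { induction n0 as [|n0 IH]; intros a0 Ha; [reflexivity|].
    simpl seq. rewrite sumlist_cons, IH by lia.
    replace (Nat.eqb i a0) with false by (symmetry; apply Nat.eqb_neq; lia). ring. }
  revert a; induction n as [|n IH]; intros a; [simpl seq; rewrite sumlist_nil; lra|].
  simpl seq. rewrite sumlist_cons. destruct (Nat.eqb i a) eqn:E.
  - apply Nat.eqb_eq in E. rewrite Hzero by lia. lra.
  - specialize (IH (S a)). lra.
Qed.

Lemma sumlist_square {X} (l : list X) f :
  sumlist l f * sumlist l f = sumlist l (fun i => sumlist l (fun j => f i * f j)).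
Proof.
  rewrite <- sumlist_scal_r. apply sumlist_ext; intro i. symmetry. apply sumlist_scal_l.
Qed.

(* Take expectations in [2 B N <= B^2 (1 - Z) + N^2]. *)
Lemma chain_expect_second_moment Q (HQ : stochastic Q) x n (N Z : list letter -> R) B :
  0 < B -> (forall w, length w = n -> Z w = 0 \/ (Z w = 1 /\ N w = 0)) ->
  chain_expect Q x n (fun w => N w * N w) <= B * chain_expect Q x n N ->
  chain_expect Q x n Z <= 1 - chain_expect Q x n N / B.
Proof.
  intros HB HZ Hsecond.
  assert (Hpt : chain_expect Q x n (fun w => 2 * B * N w)
                <= chain_expect Q x n (fun w => B * B * (1 - Z w) + N w * N w)).
  { apply chain_expect_le; auto. intros w Hw.
    destruct (HZ w Hw) as [-> | [-> ->]]; [|lra].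
    pose proof (Rle_0_sqr (B - N w)). unfold Rsqr in *. nra. }
  rewrite chain_expect_plus, !chain_expect_scal_l in Hpt.
  rewrite (chain_expect_ext Q x n (fun w => 1 - Z w) (fun w => 1 + (-1) * Z w)) in Hpt
    by (intros; ring).
  rewrite chain_expect_plus, chain_expect_scal_l, chain_expect_const in Hpt by auto.
  apply Rmult_le_reg_l with (B * B); [nra|].
  unfold Rdiv. rewrite Rmult_minus_distr_l, Rmult_1_r.
  replace (B * B * (chain_expect Q x n N * / B)) with (B * chain_expect Q x n N) by (field; lra).
  nra.
Qed.

Definition avoids (s w : list letter) (J : list nat) : bool :=
  forallb (fun m => negb (occurs_at s w m)) J.

(* [1 + 2 T], where [T] bounds the row sums [sum_(j > i) C0 (beta ^ (j - i) + beta ^ r)]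
   of the pair correlations in the second moment. *)
Definition block_const (beta C0 : R) (M : nat) : R :=
  1 + 2 * (C0 * (beta / (1 - beta) + INR M / (1 - beta))).

Lemma block_const_ge_1 beta C0 M : 0 < beta < 1 -> 0 <= C0 -> 1 <= block_const beta C0 M.
Proof.
  intros Hb HC0. unfold block_const. pose proof (pos_INR M).
  assert (0 <= beta / (1 - beta)) by (apply Rdiv_le_0_compat; lra).
  assert (0 <= INR M / (1 - beta)) by (apply Rdiv_le_0_compat; lra).
  assert (0 <= C0 * (beta / (1 - beta) + INR M / (1 - beta))) by (apply Rmult_le_pos; lra).
  lra.
Qed.

Section Block.
Variable Q : letter -> letter -> R.
Hypothesis HQ : stochastic Q.
Variables (beta C0 eta : R) (M : nat).
Hypothesis Hbeta : 0 < beta < 1.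
Hypothesis HC0 : 0 <= C0.
Hypothesis Hdecay : forall z c, trans_prob Q z c <= C0 * beta ^ length c.
Hypothesis Hcesaro :
  forall r x y, INR r * eta <= sumlist (seq 0 (M * r)) (fun k => Qpow Q k x y).
Variable s : list letter.

Let r := length s.
Let J := seq r (M * r).
Let K := (r + M * r)%nat.
Let occ j v := b2R (occurs_at s v j).
Let count v := sumlist J (fun j => occ j v).

Lemma in_block_window j : In j J -> (r <= j < K)%nat.
Proof. intros Hj. apply in_seq in Hj. unfold K. lia. Qed.

Lemma block_first_moment x :
  INR r * eta * sumA (fun z => trans_prob Q z (rev s)) <= chain_expect Q x K count.
Proof.
  unfold count. rewrite chain_expect_sumlist.
  rewrite (sumlist_ext_in J _ (fun j => sumA (fun z => Qpow Q (j - r) x z * trans_prob Q z (rev s))))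
    by (intros j Hj; apply in_block_window in Hj; apply chain_expect_occurs_at; auto; lia).
  replace J with (seq (r + 0) (M * r)) by (rewrite Nat.add_0_r; reflexivity).
  rewrite sumlist_seq_shift.
  rewrite (sumlist_ext _ _ (fun k => sumA (fun z => Qpow Q k x z * trans_prob Q z (rev s))))
    by (intros k; replace (r + k - r)%nat with k by lia; reflexivity).
  unfold sumA. rewrite sumlist_swap, <- sumlist_scal_l. apply sumlist_le; intro z.
  rewrite sumlist_scal_r.
  apply Rmult_le_compat_r; [apply trans_prob_bounds; auto | apply Hcesaro].
Qed.

Lemma block_pair_le x i j : In i J -> In j J -> (i < j)%nat ->
  chain_expect Q x K (fun v => occ i v * occ j v)
  <= chain_expect Q x K (occ i) * (C0 * (beta ^ (j - i) + beta ^ r)).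
Proof.
  intros Hi Hj Hij. apply in_block_window in Hi, Hj.
  eapply Rle_trans.
  - apply (chain_expect_occurs_pair_le Q HQ s (fun k => C0 * beta ^ k)); auto; lia.
  - apply Rmult_le_compat_l; [apply chain_expect_nonneg; auto; intros; apply b2R_bounds|].
    apply Rmult_le_compat_l; [exact HC0|].
    pose proof (pow_le beta (j - i) ltac:(lra)). pose proof (pow_le beta r ltac:(lra)).
    unfold r in *. destruct (Nat.min_spec (j - i) (length s)) as [[_ ->] | [_ ->]]; lra.
Qed.

Lemma block_row_sum_le i :
  sumlist J (fun j => if Nat.ltb i j then C0 * (beta ^ (j - i) + beta ^ r) else 0)
  <= C0 * (beta / (1 - beta) + INR M / (1 - beta)).
Proof.
  rewrite (sumlist_ext J _ (fun j => C0 * ((if Nat.ltb i j then beta ^ (j - i) else 0)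
                                         + (if Nat.ltb i j then beta ^ r else 0))))
    by (intros j; destruct (Nat.ltb i j); ring).
  rewrite sumlist_scal_l, sumlist_plus. apply Rmult_le_compat_l; [exact HC0|].
  apply Rplus_le_compat; [apply geometric_tail_sum; auto|].
  eapply Rle_trans; [apply (sumlist_const_le J _ (beta ^ r))|].
  - intros j _. pose proof (pow_le beta r ltac:(lra)). destruct (Nat.ltb i j); lra.
  - unfold J. rewrite length_seq, mult_INR, Rmult_assoc.
    pose proof (INR_mul_pow_le beta r Hbeta). pose proof (pos_INR M).
    replace (INR M / (1 - beta)) with (INR M * (1 / (1 - beta))) by (field; lra).
    apply Rmult_le_compat_l; auto.
Qed.

Lemma block_second_moment x :
  chain_expect Q x K (fun v => count v * count v)
  <= block_const beta C0 M * chain_expect Q x K count.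
Proof.
  set (e i := chain_expect Q x K (occ i)).
  set (g i j := if Nat.ltb i j then C0 * (beta ^ (j - i) + beta ^ r) else 0).
  assert (He : forall i, 0 <= e i)
    by (intros; apply chain_expect_nonneg; auto; intros; apply b2R_bounds).
  assert (Hg : forall i j, 0 <= g i j).
  { intros i j. unfold g. destruct (Nat.ltb i j); [|lra].
    pose proof (pow_le beta (j - i) ltac:(lra)). pose proof (pow_le beta r ltac:(lra)).
    apply Rmult_le_pos; lra. }
  (* each ordered pair is charged to its earlier occurrence *)
  assert (Hpair : forall i j, In i J -> In j J ->
            chain_expect Q x K (fun v => occ i v * occ j v)
            <= e i * g i j + e j * g j i + (if Nat.eqb i j then e i else 0)).
  { intros i j Hi Hj. unfold g.
    destruct (Nat.lt_trichotomy i j) as [Hij | [<- | Hij]].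
    - rewrite (proj2 (Nat.ltb_lt i j) Hij), (proj2 (Nat.ltb_ge j i)), (proj2 (Nat.eqb_neq i j))
        by lia.
      pose proof (block_pair_le x i j Hi Hj Hij). fold (e i) in H. lra.
    - rewrite Nat.ltb_irrefl, Nat.eqb_refl. right.
      rewrite !Rmult_0_r, !Rplus_0_l. apply chain_expect_ext; intros v _.
      unfold occ. destruct (occurs_at s v i); simpl; ring.
    - rewrite (proj2 (Nat.ltb_ge i j)), (proj2 (Nat.ltb_lt j i) Hij), (proj2 (Nat.eqb_neq i j))
        by lia.
      pose proof (block_pair_le x j i Hj Hi Hij). fold (e j) in H.
      rewrite (chain_expect_ext Q x K _ (fun v => occ j v * occ i v)) by (intros; ring). lra. }
  unfold count.
  rewrite (chain_expect_ext Q x K _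
             (fun v => sumlist J (fun i => sumlist J (fun j => occ i v * occ j v))))
    by (intros; apply sumlist_square).
  rewrite chain_expect_sumlist.
  rewrite (sumlist_ext J _
             (fun i => sumlist J (fun j => chain_expect Q x K (fun v => occ i v * occ j v))))
    by (intro i; apply chain_expect_sumlist).
  set (T := C0 * (beta / (1 - beta) + INR M / (1 - beta))).
  assert (Hrow : forall i, e i * sumlist J (g i) <= e i * T)
    by (intros i; apply Rmult_le_compat_l; [apply He | apply block_row_sum_le]).
  assert (Hdiag : forall i, sumlist J (fun j => if Nat.eqb i j then e i else 0) <= e i)
    by (intros i; apply sumlist_seq_diag_le, He).
  apply Rle_trans with (sumlist J (fun i => sumlist J (fun j =>
      e i * g i j + e j * g j i + (if Nat.eqb i j then e i else 0)))).
  { apply sumlist_le_in; intros i Hi. apply sumlist_le_in; intros j Hj. apply Hpair; auto. }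
  rewrite (sumlist_ext J _ (fun i => e i * sumlist J (g i) + sumlist J (fun j => e j * g j i)
                                     + sumlist J (fun j => if Nat.eqb i j then e i else 0)))
    by (intro i; rewrite !sumlist_plus, sumlist_scal_l; reflexivity).
  rewrite !sumlist_plus, (sumlist_swap J J (fun i j => e j * g j i)).
  rewrite (sumlist_ext J (fun j => sumlist J (fun i => e j * g j i)) (fun j => e j * sumlist J (g j)))
    by (intro j; apply sumlist_scal_l).
  rewrite chain_expect_sumlist. unfold block_const. fold T.
  change (sumlist J (fun i => chain_expect Q x K (occ i))) with (sumlist J e).
  pose proof (sumlist_scal_l J T e).
  assert (sumlist J (fun i => e i * sumlist J (g i)) <= sumlist J (fun i => T * e i))
    by (apply sumlist_le; intro i; rewrite (Rmult_comm T); apply Hrow).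
  assert (sumlist J (fun i => sumlist J (fun j => if Nat.eqb i j then e i else 0)) <= sumlist J e)
    by (apply sumlist_le, Hdiag).
  lra.
Qed.

Lemma block_miss_le x :
  chain_expect Q x K (fun v => b2R (avoids s v J))
  <= 1 - INR r * eta * sumA (fun z => trans_prob Q z (rev s)) / block_const beta C0 M.
Proof.
  pose proof (block_const_ge_1 beta C0 M Hbeta HC0) as HB.
  eapply Rle_trans.
  - apply (chain_expect_second_moment Q HQ x K count _ (block_const beta C0 M));
      [lra | | apply block_second_moment].
    intros v _. unfold avoids. destruct (forallb _ J) eqn:E; [right | left]; simpl; auto.
    split; [reflexivity|]. unfold count. rewrite <- (sumlist_zero J). apply sumlist_ext_in.
    intros j Hj. rewrite forallb_forall in E. specialize (E j Hj).
    unfold occ. destruct (occurs_at s v j); [discriminate | reflexivity].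
  - apply Rplus_le_compat_l, Ropp_le_contravar. unfold Rdiv.
    apply Rmult_le_compat_r; [apply Rlt_le, Rinv_0_lt_compat; lra | apply block_first_moment].
Qed.

End Block.

Definition survives (s w : list letter) : bool :=
  avoids s w (seq (length s) (length w + 1 - length s)).

(* [survival p Q s n = P(Y > n)]. *)
Definition survival p Q (s : list letter) (n : nat) : R :=
  sumlist (words n) (fun w => b2R (survives s w) * path_prob p Q w).

Lemma avoids_incl s w J J' : incl J J' -> avoids s w J' = true -> avoids s w J = true.
Proof.
  unfold avoids. rewrite !forallb_forall. intros HJ H m Hm. apply H, HJ, Hm.
Qed.

Lemma survives_app s w v :
  survives s (w ++ v) = true -> survives s w = true /\ survives s v = true.
Proof.
  unfold survives, avoids. rewrite !forallb_forall, length_app. intros H. split.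
  - intros m Hm. apply in_seq in Hm as Hm'.
    rewrite <- (occurs_at_app_l s w v) by lia. apply H, in_seq. lia.
  - intros m Hm. apply in_seq in Hm.
    rewrite <- (occurs_at_app_r s w v) by lia. apply H, in_seq. lia.
Qed.

Section Survival.
Variable Q : letter -> letter -> R.
Variable p : letter -> R.
Hypothesis HQ : stochastic Q.
Hypothesis Hp : invariant_measure Q p.
Variable s : list letter.

Lemma p_bounds z : 0 <= p z <= 1.
Proof.
  destruct Hp as [H0 [H1 _]]. rewrite sumA_eq in H1.
  pose proof (H0 LA); pose proof (H0 LC); pose proof (H0 LG); pose proof (H0 LT).
  split; [apply H0|]. destruct z; lra.
Qed.

Lemma path_prob_nonneg w : 0 <= path_prob p Q w.
Proof.
  destruct w as [|u w]; simpl; [lra|].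
  apply Rmult_le_pos; [apply p_bounds | apply trans_prob_bounds; auto].
Qed.

Lemma path_prob_app u w v :
  path_prob p Q ((u :: w) ++ v) = path_prob p Q (u :: w) * trans_prob Q (last (u :: w) LA) v.
Proof. simpl app. unfold path_prob. rewrite trans_prob_app, last_cons. ring. Qed.

Lemma sum_path_prob n : sumlist (words n) (path_prob p Q) = 1.
Proof.
  destruct n as [|n].
  - rewrite sumlist_words_0. reflexivity.
  - rewrite sumlist_words_S. destruct Hp as [_ [H1 _]]. rewrite <- H1.
    apply sumlist_ext; intro u. unfold path_prob.
    rewrite sumlist_scal_l, sum_trans_prob by auto. ring.
Qed.

Lemma pword_le_sum_trans_prob : s <> nil ->
  pword p Q s <= sumA (fun z => trans_prob Q z (rev s)).
Proof.
  intros Hs. unfold pword.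
  assert (Hrev : rev s <> nil) by (intros E; apply Hs; rewrite <- (rev_involutive s), E; reflexivity).
  destruct (rev s) as [|u w]; [congruence|].
  destruct Hp as [_ [_ Hinv]]. unfold path_prob. rewrite <- Hinv.
  unfold sumA. rewrite <- sumlist_scal_r. apply sumlist_le; intro z. simpl.
  pose proof (p_bounds z). pose proof (Q_bounds Q HQ z u). pose proof (trans_prob_bounds Q HQ u w).
  rewrite Rmult_assoc. rewrite <- (Rmult_1_l (Q z u * _)) at 2.
  apply Rmult_le_compat_r; [apply Rmult_le_pos|]; lra.
Qed.

Lemma survival_bounds n : 0 <= survival p Q s n <= 1.
Proof.
  unfold survival. split.
  - apply sumlist_nonneg. intros w _.
    apply Rmult_le_pos; [apply b2R_bounds | apply path_prob_nonneg].
  - rewrite <- (sum_path_prob n). apply sumlist_le; intro w.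
    pose proof (b2R_bounds (survives s w)). pose proof (path_prob_nonneg w). nra.
Qed.

Lemma survival_step K c n :
  (forall y, chain_expect Q y K (fun v => b2R (survives s v)) <= c) -> (1 <= n)%nat ->
  survival p Q s (n + K) <= c * survival p Q s n.
Proof.
  intros Hblock Hn. unfold survival. rewrite sumlist_words_add, <- sumlist_scal_l.
  apply sumlist_le_in. intros w Hw. apply words_length in Hw.
  destruct w as [|u w]; [simpl in Hw; lia|].
  set (a := b2R (survives s (u :: w)) * path_prob p Q (u :: w)).
  assert (0 <= a) by (apply Rmult_le_pos; [apply b2R_bounds | apply path_prob_nonneg]).
  apply Rle_trans with (a * chain_expect Q (last (u :: w) LA) K (fun v => b2R (survives s v))).
  - unfold chain_expect. rewrite <- sumlist_scal_l. apply sumlist_le; intro v.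
    rewrite path_prob_app. unfold a.
    pose proof (path_prob_nonneg (u :: w)).
    pose proof (trans_prob_bounds Q HQ (last (u :: w) LA) v).
    destruct (survives s ((u :: w) ++ v)) eqn:E.
    + apply survives_app in E as [-> ->]. simpl. lra.
    + pose proof (b2R_bounds (survives s (u :: w))). pose proof (b2R_bounds (survives s v)).
      change (b2R false) with 0. rewrite Rmult_0_l.
      apply Rmult_le_pos; apply Rmult_le_pos; lra.
  - rewrite (Rmult_comm c). apply Rmult_le_compat_l; auto.
Qed.

Lemma survival_geometric K c : 0 <= c ->
  (forall n, (1 <= n)%nat -> survival p Q s (n + K) <= c * survival p Q s n) ->
  forall j i, survival p Q s (S i + j * K) <= c ^ j.
Proof.
  intros Hc Hstep. induction j as [|j IH]; intros i.
  - rewrite Nat.add_0_r. simpl. apply survival_bounds.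
  - replace (S i + S j * K)%nat with ((S i + j * K) + K)%nat by lia.
    eapply Rle_trans; [apply Hstep; lia|]. apply Rmult_le_compat_l; [exact Hc | apply IH].
Qed.

Lemma hit_prob_nonneg n : 0 <= hit_prob p Q s n.
Proof.
  apply sumlist_nonneg. intros w _. destruct (first_hit s w); [apply path_prob_nonneg | lra].
Qed.

Lemma hit_prob_le_1 n : hit_prob p Q s n <= 1.
Proof.
  rewrite <- (sum_path_prob n). apply sumlist_le; intro w.
  pose proof (path_prob_nonneg w). destruct (first_hit s w); lra.
Qed.

Lemma first_hit_survives w a : first_hit s (w ++ a :: nil) = true -> survives s w = true.
Proof.
  unfold first_hit, survives, avoids. intros H. apply andb_prop in H as [_ H].
  rewrite forallb_forall in *. intros m Hm. rewrite length_app in H. simpl length in H.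
  specialize (H m Hm). apply in_seq in Hm. rewrite occurs_at_app_l in H by lia. exact H.
Qed.

Lemma hit_prob_le_survival n : hit_prob p Q s (S n) <= survival p Q s n.
Proof.
  unfold hit_prob, survival. replace (S n) with (n + 1)%nat by lia.
  rewrite sumlist_words_add. apply sumlist_le; intro w.
  rewrite sumlist_words_S.
  apply Rle_trans with (sumA (fun a => b2R (survives s w) * path_prob p Q (w ++ a :: nil))).
  - apply sumlist_le; intro a. rewrite sumlist_words_0.
    pose proof (path_prob_nonneg (w ++ a :: nil)).
    destruct (first_hit s (w ++ a :: nil)) eqn:E.
    + rewrite (first_hit_survives w a E). simpl. lra.
    + pose proof (b2R_bounds (survives s w)). nra.
  - right. unfold sumA. rewrite sumlist_scal_l. f_equal.
    destruct w as [|u w].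
    + destruct Hp as [_ [H1 _]]. change (path_prob p Q nil) with 1. rewrite <- H1.
      apply sumlist_ext; intro a. simpl. ring.
    + transitivity (sumlist letters (fun a => path_prob p Q (u :: w) * Q (last (u :: w) LA) a)).
      * apply sumlist_ext; intro a. rewrite path_prob_app.
        change (trans_prob Q (last (u :: w) LA) (a :: nil)) with (Q (last (u :: w) LA) a * 1). ring.
      * rewrite sumlist_scal_l. destruct HQ as [_ H1]. unfold sumA in H1. rewrite H1. ring.
Qed.

End Survival.

Lemma pow_le_1_plus_pow t n m : 0 <= t -> (n <= m)%nat -> t ^ n <= 1 + t ^ m.
Proof.
  intros Ht Hnm. pose proof (pow_le t m Ht). destruct (Rle_lt_dec t 1).
  - pose proof (pow_le1_antimono t 0 n ltac:(lra) ltac:(lia)). simpl in *. lra.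
  - pose proof (Rle_pow t n m ltac:(lra) Hnm). lra.
Qed.

Lemma exp_pow x n : exp x ^ n = exp (INR n * x).
Proof.
  induction n as [|n IH]; simpl pow.
  - rewrite Rmult_0_l, exp_0. reflexivity.
  - rewrite IH, <- exp_plus, S_INR. f_equal. ring.
Qed.

Lemma one_minus_mul_pow_le theta K t : (1 <= K)%nat -> 0 <= theta ->
  0 <= t <= 1 + theta / INR K -> (1 - theta) * t ^ K <= 1.
Proof.
  intros HK Hth Ht. assert (HK0 : 0 < INR K) by (apply lt_0_INR; lia).
  assert (HtK : t ^ K <= exp theta).
  { apply Rle_trans with (exp (theta / INR K) ^ K).
    - apply pow_incr. pose proof (exp_ineq1_le (theta / INR K)). lra.
    - rewrite exp_pow. right. f_equal. field. lra. }
  pose proof (pow_le t K (proj1 Ht)).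
  destruct (Rle_lt_dec 1 theta) as [Hge|Hlt].
  - apply Rle_trans with 0; [|lra]. rewrite <- (Rmult_0_l (t ^ K)).
    apply Rmult_le_compat_r; lra.
  - pose proof (exp_ineq1_le (- theta)).
    assert (exp (- theta) * exp theta = 1) by (rewrite <- exp_plus, Rplus_opp_l; apply exp_0).
    apply Rle_trans with (exp (- theta) * exp theta); [|lra].
    apply Rmult_le_compat; lra.
Qed.

Lemma power_series_term_bound (a : nat -> R) K c t : (1 <= K)%nat -> 0 <= t -> 0 <= c ->
  c * t ^ K <= 1 -> (forall n, Rabs (a n) <= 1) ->
  (forall i j, Rabs (a (i + 2 + j * K)%nat) <= c ^ j) ->
  forall n, Rabs (a n * t ^ n) <= 1 + t ^ (K + 2).
Proof.
  intros HK Ht Hc HcK Ha1 Hdecay n. rewrite Rabs_mult, (Rabs_pos_eq (t ^ n)) by (apply pow_le; lra).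
  pose proof (pow_le t n Ht).
  destruct (Nat.lt_ge_cases n 2) as [Hn|Hn].
  - apply Rle_trans with (t ^ n).
    + rewrite <- (Rmult_1_l (t ^ n)) at 2. apply Rmult_le_compat_r; auto.
    + apply pow_le_1_plus_pow; auto; lia.
  - set (j := ((n - 2) / K)%nat). set (i := ((n - 2) mod K)%nat).
    assert (Hi : (i < K)%nat) by (apply Nat.mod_upper_bound; lia).
    assert (Hnij : n = (i + 2 + j * K)%nat)
      by (unfold i, j; pose proof (Nat.div_mod_eq (n - 2) K); lia).
    rewrite Hnij at 2.
    replace (t ^ (i + 2 + j * K)) with (t ^ (i + 2) * (t ^ K) ^ j)
      by (rewrite <- pow_mult, <- pow_add; f_equal; lia).
    pose proof (pow_le t (i + 2) Ht). pose proof (pow_le (t ^ K) j (pow_le t K Ht)).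
    assert (Hcj : c ^ j * (t ^ K) ^ j <= 1).
    { rewrite <- Rpow_mult_distr, <- (pow1 j). apply pow_incr.
      split; [apply Rmult_le_pos; [|apply pow_le]|]; lra. }
    apply Rle_trans with (c ^ j * (t ^ (i + 2) * (t ^ K) ^ j)).
    + rewrite Hnij at 1. apply Rmult_le_compat_r; [apply Rmult_le_pos|]; auto.
    + apply Rle_trans with (t ^ (i + 2)); [nra | apply pow_le_1_plus_pow; auto; lia].
Qed.

Lemma CV_radius_ge_of_bounded (a : nat -> R) (R0 : R) :
  (forall t, 0 <= t < R0 -> exists B, forall n, Rabs (a n * t ^ n) <= B) ->
  Rbar_le R0 (CV_radius a).
Proof.
  intros Hbnd. destruct (CV_radius_bounded a) as [Hub _]. pose proof (CV_radius_ge_0 a) as H0.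
  destruct (CV_radius a) as [rho| |]; simpl in *; auto.
  apply Rnot_lt_le. intros Hlt.
  assert (Hle : Rbar_le ((rho + R0) / 2) rho) by (apply Hub, Hbnd; lra).
  simpl in Hle. lra.
Qed.

Section WaitingTime.
Variable Q : letter -> letter -> R.
Variable p : letter -> R.
Hypothesis HQ : stochastic Q.
Hypothesis Hp : invariant_measure Q p.
Variables (beta C0 eta : R) (M : nat).
Hypothesis Hbeta : 0 < beta < 1.
Hypothesis HC0 : 0 <= C0.
Hypothesis Hdecay : forall z c, trans_prob Q z c <= C0 * beta ^ length c.
Hypothesis Heta : 0 < eta.
Hypothesis Hcesaro :
  forall r x y, INR r * eta <= sumlist (seq 0 (M * r)) (fun k => Qpow Q k x y).

Lemma survival_block_decay s : s <> nil ->
  let theta := INR (length s) * eta * pword p Q s / block_const beta C0 M in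
  0 <= theta <= 1 /\
  forall j i, survival p Q s (S i + j * (length s + M * length s)) <= (1 - theta) ^ j.
Proof.
  intros Hs theta. set (r := length s) in *. set (K := (r + M * r)%nat).
  pose proof (block_const_ge_1 beta C0 M Hbeta HC0) as HB.
  assert (Hmiss : forall y, chain_expect Q y K (fun v => b2R (survives s v)) <= 1 - theta).
  { intros y.
    eapply Rle_trans; [|eapply Rle_trans; [apply (block_miss_le Q HQ beta C0 eta M); auto|]].
    - apply chain_expect_le; auto. intros v Hv.
      destruct (survives s v) eqn:E; [|apply b2R_bounds].
      replace (avoids s v _) with true; [simpl; lra|]. symmetry.
      apply (avoids_incl s v _ (seq (length s) (length v + 1 - length s))); [|exact E].
      intros m Hm. apply in_seq in Hm. apply in_seq. rewrite Hv. lia.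
    - unfold theta. apply Rplus_le_compat_l, Ropp_le_contravar. unfold Rdiv.
      apply Rmult_le_compat_r; [apply Rlt_le, Rinv_0_lt_compat; lra|].
      apply Rmult_le_compat_l; [apply Rmult_le_pos; [apply pos_INR | lra]|].
      apply pword_le_sum_trans_prob; auto. }
  assert (Htheta0 : 0 <= theta).
  { unfold theta, pword. apply Rdiv_le_0_compat; [|lra].
    apply Rmult_le_pos; [apply Rmult_le_pos; [apply pos_INR | lra] | apply path_prob_nonneg; auto]. }
  assert (Htheta1 : theta <= 1).
  { pose proof (Hmiss LA).
    assert (0 <= chain_expect Q LA K (fun v => b2R (survives s v)))
      by (apply chain_expect_nonneg; auto; intros; apply b2R_bounds).
    lra. }
  split; [lra|].
  apply survival_geometric; auto; [lra|]. intros n Hn. apply survival_step; auto.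
Qed.

End WaitingTime.

Theorem proposition2 (Q : letter -> letter -> R) (p : letter -> R)
  (HQ : stochastic Q) (Hirr : irreducible Q) (Hap : aperiodic Q)
  (Hp : invariant_measure Q p) :
  exists kappa : R, 0 < kappa /\
    forall (r : nat) (s : list letter),
      (1 <= r)%nat -> length s = r -> 0 < pword p Q s ->
      Rbar_le (Finite (1 + kappa * pword p Q s)) (CV_radius (hit_prob p Q s)).
Proof.
  destruct (trans_prob_decay Q HQ Hirr Hap) as [beta [C0 [Hbeta [HC0 Hdecay]]]].
  destruct (Qpow_cesaro_lower_bound Q HQ Hirr) as [M [eta [Heta Hcesaro]]].
  set (B := block_const beta C0 M).
  pose proof (block_const_ge_1 beta C0 M Hbeta HC0) as HB. fold B in HB.
  pose proof (pos_INR M) as HM.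
  exists (eta / (B * (INR M + 1))). split; [apply Rdiv_lt_0_compat; nra|].
  intros r s Hr Hs HP. subst r.
  assert (Hsnil : s <> nil) by (intros ->; simpl in Hr; lia).
  set (K := (length s + M * length s)%nat).
  destruct (survival_block_decay Q p HQ Hp beta C0 eta M Hbeta HC0 Hdecay Heta Hcesaro s Hsnil)
    as [Htheta Hsurv].
  fold B K in Htheta, Hsurv.
  set (theta := INR (length s) * eta * pword p Q s / B) in *.
  apply CV_radius_ge_of_bounded. intros t Ht. exists (1 + t ^ (K + 2)).
  apply (power_series_term_bound _ K (1 - theta)); try lia; try lra.
  - apply one_minus_mul_pow_le; [unfold K; lia | lra |].
    replace (theta / INR K) with (eta / (B * (INR M + 1)) * pword p Q s); [lra|].
    assert (0 < INR (length s)) by (apply lt_0_INR; lia).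
    unfold theta, K. rewrite plus_INR, mult_INR. field. split; [lra | split; nra].
  - intros n. rewrite Rabs_pos_eq by (apply hit_prob_nonneg; auto). apply hit_prob_le_1; auto.
  - intros i j. rewrite Rabs_pos_eq by (apply hit_prob_nonneg; auto).
    replace (i + 2 + j * K)%nat with (S (S i + j * K)) by lia.
    eapply Rle_trans; [apply hit_prob_le_survival; auto | apply Hsurv].
Qed.
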